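(* Let $A\in\mathcal A_n$ and $T=\tau(A)$. For $0\le i<n$, the projective dimension of the simple $A$-module $S_i$ is \[ \operatorname{pdim}(S_i)=\operatorname{dist}_T(i,i+1)-1. \] In particular, $\operatorname{gldim}(A)=\max_{0\le i<n}\operatorname{dist}_T(i,i+1)-1$.
   Context: $K$ is an algebraically closed field. $\mathcal A_n$ is the set of ordered products $A=A_1\times\cdots\times A_k$ of connected linear Nakayama algebras with $n$ simple modules in total. The Kupisch series $[c_0,\dots,c_{n-1}]$ of $A$ is the concatenation of those of the factors, where a connected linear Nakayama algebra with $m$ simple modules has Kupisch series $[c_0,\dots,c_{m-1}]$, $c_i=\dim e_iA$, characterized by $c_{i+1}+1\ge c_i\ge2$ for $0\le i<m-1$ and $c_{m-1}=1$. The simple modules $S_0,\dots,S_{n-1}$ are indexed compatibly with the Kupisch series ($S_i=e_iA/e_iJ$, $J$ the Jacobson radical). $\tau(A)$ is the tree with vertex set $\{0,\dots,n\}$ and an edge between $i+c_i$ and $i$ for each $0\le i<n$; $\operatorname{dist}_T(i,j)$ is the number of edges on the unique path between $i$ and $j$ in $T$. *)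

From HB Require Import structures.
From mathcomp Require Import all_boot all_order all_algebra.
Set Implicit Arguments. Unset Strict Implicit. Unset Printing Implicit Defensive.
Import GRing.Theory.
Local Open Scope ring_scope.

(* Kupisch series of an element of A_n (a product of connected linear
   Nakayama algebras with n simples in total), given as c : nat -> nat
   with only c 0, ..., c (n-1) relevant.  Concatenating the series of
   the connected factors gives exactly the sequences with
     c_i >= 1, c_i <= c_{i+1} + 1 (i < n-1), c_{n-1} = 1
   (factor boundaries are the positions where c_i = 1). *)
Definition kupisch (n : nat) (c : nat -> nat) : Prop :=
  [/\ forall i, (i < n)%N -> (0 < c i)%N,
      forall i, (i.+1 < n)%N -> (c i <= (c i.+1).+1)%N
    & c n.-1 = 1%N].

(* The tree tau(A): vertices 0..n, edge between i and i + c_i (i < n). *)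
Definition tadj (n : nat) (c : nat -> nat) (u v : nat) : bool :=
  ((u < n)%N && (v == u + c u)%N) || ((v < n)%N && (u == v + c v)%N).

Fixpoint treach (n : nat) (c : nat -> nat) (k u v : nat) : bool :=
  match k with
  | 0 => u == v
  | k'.+1 => has (fun w => tadj n c u w && treach n c k' w v) (iota 0 n.+1)
  end.

(* graph distance (= number of edges of the unique path in the tree);
   the tree has n+1 vertices so the distance is at most n. *)
Definition tdist (n : nat) (c : nat -> nat) (u v : nat) : nat :=
  find (fun k => treach n c k u v) (iota 0 n.+1).

(* Right A-modules (finite dimensional) as representations of the bound
   quiver 0 -> 1 -> ... -> n-1 with relations: every path of length c_i
   starting at i is zero (so dim e_i A = c_i).  Vectors are row vectors,
   V_i = K^(rdim i), and the arrow i -> i+1 acts by v |-> v *m rmap i. *)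
Record rep (K : fieldType) := Rep {
  rdim : nat -> nat ;
  rmap : forall i, 'M[K]_(rdim i, rdim i.+1) }.

Fixpoint pathmx (K : fieldType) (V : rep K) (i k : nat)
  : 'M[K]_(rdim V i, rdim V (k + i)) :=
  match k with
  | 0 => 1%:M
  | k'.+1 => pathmx V i k' *m rmap V (k' + i)
  end.

Definition valid_rep (K : fieldType) (n : nat) (c : nat -> nat) (V : rep K)
  : Prop :=
  (forall i, (n <= i)%N -> rdim V i = 0%N) /\
  (forall i, (i < n)%N -> pathmx V i (c i) = 0).

Definition hom (K : fieldType) (V W : rep K) :=
  forall i, 'M[K]_(rdim V i, rdim W i).

Definition is_hom (K : fieldType) (V W : rep K) (f : hom V W) : Prop :=
  forall i, rmap V i *m f i.+1 = f i *m rmap W i.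

Definition epi (K : fieldType) (V W : rep K) (f : hom V W) : Prop :=
  forall i, row_full (f i).

Definition mono (K : fieldType) (V W : rep K) (f : hom V W) : Prop :=
  forall i, row_free (f i).

Definition exact_at (K : fieldType) (U V W : rep K) (f : hom U V) (g : hom V W)
  : Prop := forall i, (f i == kermx (g i))%MS.

Definition projective (K : fieldType) (n : nat) (c : nat -> nat) (P : rep K)
  : Prop :=
  forall (V W : rep K) (g : hom V W) (h : hom P W),
    valid_rep n c V -> valid_rep n c W -> is_hom g -> epi g -> is_hom h ->
    exists h' : hom P V, is_hom h' /\ forall i, h' i *m g i = h i.

Definition pdim_le (K : fieldType) (n : nat) (c : nat -> nat) (M : rep K)
  (m : nat) : Prop :=
  exists (P : nat -> rep K) (d : forall k, hom (P k.+1) (P k))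
         (eps : hom (P 0%N) M),
    [/\ forall k, (k <= m)%N -> valid_rep n c (P k) /\ projective n c (P k),
        forall k, (k < m)%N -> is_hom (d k),
        [/\ is_hom eps, epi eps & (0 < m)%N -> exact_at (d 0%N) eps],
        forall k, (k.+1 < m)%N -> exact_at (d k.+1) (d k)
      & if m is m'.+1 then mono (d m') else mono eps].

Definition has_pdim (K : fieldType) (n : nat) (c : nat -> nat) (M : rep K)
  (m : nat) : Prop :=
  pdim_le n c M m /\ forall m', pdim_le n c M m' -> (m <= m')%N.

Definition has_gldim (K : fieldType) (n : nat) (c : nat -> nat) (m : nat)
  : Prop :=
  (forall M : rep K, valid_rep n c M -> pdim_le n c M m) /\
  (forall m', (forall M : rep K, valid_rep n c M -> pdim_le n c M m') ->
              (m <= m')%N).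

Definition simple_rep (K : fieldType) (i : nat) : rep K :=
  @Rep K (fun j => nat_of_bool (j == i)) (fun j => 0).

(* For a module N concentrated at a vertex j < n, put x_0 = j, x_1 = j+1 and
   x_(k+2) = par x_k, where par i = i + c_i is the parent of i in tau(A).  The
   interval modules Q_k = [x_k, x_(k+2)) are sums of copies of e_(x_k) A while
   x_k < n, and the kernel of Q_k -> Q_(k-1) is [x_(k+1), x_(k+2)), the image of
   Q_(k+1); so they form a projective resolution of N that stops at the first K
   with x_K = x_(K+1).  That is where the ancestor chains of j and j+1 meet, so
   K = dist(j, j+1) and pdim N <= K - 1.  The resolution is minimal: if P were a
   shorter one, the chain endomorphism Q -> P -> Q lifting the identity would stay
   invertible at the vertices x_k, x_(k+1) of every Q_k, while its factor through
   P has to vanish just beyond the end of P.  Finally every module is an iterated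
   extension of modules concentrated at single vertices, and the horseshoe lemma
   bounds the projective dimension of extensions. *)

From Pilot Require Import Defs.
From mathcomp Require Import all_boot all_order all_algebra.
From mathcomp Require Import zify.
From Stdlib Require Import ClassicalEpsilon.
Set Implicit Arguments. Unset Strict Implicit. Unset Printing Implicit Defensive.
Import GRing.Theory.

Local Notation hom := Defs.hom.

Section MatrixFacts.
Variable K : fieldType.
Local Open Scope ring_scope.

Lemma mx_dim0_eq m p (A B : 'M[K]_(m, p)) : (m == 0)%N || (p == 0)%N -> A = B.
Proof.
case/orP=> /eqP E; subst; first by rewrite (flatmx0 A) (flatmx0 B).
by rewrite (thinmx0 A) (thinmx0 B).
Qed.

Lemma eq_pid_mx m p a b : minn a (minn m p) = minn b (minn m p) ->
  pid_mx a = pid_mx b :> 'M[K]_(m, p).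
Proof.
move=> E; apply/matrixP=> i j; rewrite !mxE.
case: (i == j :> nat) /eqP => //= e.
have lt_im : (i < m)%N by [].
have lt_ip : (i < p)%N by rewrite e.
have -> : (i < a)%N = (i < minn a (minn m p))%N by rewrite !leq_min lt_im lt_ip !andbT.
by rewrite E !leq_min lt_im lt_ip !andbT.
Qed.

Lemma mxrank_pid m p a : \rank (pid_mx a : 'M[K]_(m, p)) = minn a (minn m p).
Proof.
rewrite (@eq_pid_mx m p a (minn a (minn m p))); last by lia.
by rewrite rank_pid_mx //; lia.
Qed.

Lemma pid_mx_eq0 m p a : minn a (minn m p) = 0%N -> pid_mx a = 0 :> 'M[K]_(m, p).
Proof. by move=> E; rewrite (@eq_pid_mx m p a 0) ?pid_mx_0 // E; lia. Qed.

Lemma row_free_pid_mx a m p : minn a (minn m p) = m -> row_free (pid_mx a : 'M[K]_(m, p)).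
Proof. by move=> h; rewrite /row_free mxrank_pid h. Qed.

Lemma row_full_pid_mx a m p : minn a (minn m p) = p -> row_full (pid_mx a : 'M[K]_(m, p)).
Proof. by move=> h; rewrite /row_full mxrank_pid h. Qed.

Lemma row_free_flat p (A : 'M[K]_(0, p)) : row_free A.
Proof. by rewrite /row_free -leqn0 rank_leq_row. Qed.

Section Kernels.
Variables m p q : nat.
Implicit Types (A : 'M[K]_(m, p)) (B : 'M[K]_(p, q)).

Lemma eqmx_ker_rank A B :
  A *m B = 0 -> (p <= \rank A + \rank B)%N -> (A == kermx B)%MS.
Proof.
move=> AB r; have sAK : (A <= kermx B)%MS by rewrite sub_kermx AB.
apply/andP; split => //.
have [_ <-] := mxrank_leqif_sup sAK.
by rewrite eqn_leq mxrankS //= mxrank_ker; lia.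
Qed.

Lemma eqmx_ker_rV A B : A *m B = 0 ->
  (forall w : 'rV_p, w *m B = 0 -> (w <= A)%MS) -> (A == kermx B)%MS.
Proof.
move=> AB H; apply/andP; split; first by rewrite sub_kermx AB.
by apply/rV_subP => v /sub_kermxP /H.
Qed.

Lemma eqmx_ker0 B : row_free B -> ((0 : 'M_(m, p)) == kermx B)%MS.
Proof. by rewrite -kermx_eq0 => /eqP->; rewrite /eqmx !sub0mx. Qed.

Lemma eqmx_ker_mul0 A B : (A == kermx B)%MS -> A *m B = 0.
Proof. by case/andP=> /sub_kermxP. Qed.

Lemma eqmx_ker_sub r A B (w : 'M[K]_(r, p)) :
  (A == kermx B)%MS -> w *m B = 0 -> (w <= A)%MS.
Proof. by case/andP=> _ H wB; apply: submx_trans H; apply/sub_kermxP. Qed.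

End Kernels.

Lemma eqmx_ker_pid_mx a m p q :
  minn p (minn a (minn m q)) = 0%N ->
  (p <= minn a (minn m p) + minn a (minn p q))%N ->
  ((pid_mx a : 'M[K]_(m, p)) == kermx (pid_mx a : 'M[K]_(p, q)))%MS.
Proof.
move=> h1 h2; apply: eqmx_ker_rank; last by rewrite !mxrank_pid.
by rewrite mul_pid_mx pid_mx_eq0 //; lia.
Qed.

Lemma row_free_mul_eq0 m p r (A : 'M[K]_(m, p)) (w : 'M[K]_(r, m)) :
  row_free A -> w *m A = 0 -> w = 0.
Proof. by move=> fA /eqP; rewrite mulmx_free_eq0 // => /eqP. Qed.

Lemma mxrank_full_mul m p q (A : 'M[K]_(m, p)) (B : 'M[K]_(p, q)) :
  row_full A -> \rank (A *m B) = \rank B.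
Proof. by move=> fA; rewrite (eqmxMfull B fA). Qed.

End MatrixFacts.

Section Homomorphisms.
Variable K : fieldType.
Local Open Scope ring_scope.

Lemma is_hom_comp (U V W : rep K) (f : hom U V) (g : hom V W) :
  is_hom f -> is_hom g -> is_hom (fun i => f i *m g i).
Proof. by move=> hf hg i; rewrite mulmxA hf -!mulmxA hg. Qed.

Lemma is_hom_id (U : rep K) : is_hom (fun i => 1%:M : 'M[K]_(rdim U i)).
Proof. by move=> i; rewrite mulmx1 mul1mx. Qed.

Lemma is_hom_opp (U V : rep K) (f : hom U V) : is_hom f -> is_hom (fun i => - f i).
Proof. by move=> hf i; rewrite mulmxN mulNmx hf. Qed.

(* The action of the path from a to b; junk ([pid_mx]) when b < a. *)
Fixpoint pmx (V : rep K) (a b : nat) : 'M[K]_(rdim V a, rdim V b) :=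
  match b with
  | 0 => pid_mx (rdim V a)
  | b'.+1 => if (a <= b')%N then pmx V a b' *m rmap V b' else pid_mx (rdim V a)
  end.

Lemma pmx_id V a : pmx V a a = 1%:M.
Proof. by case: a => [|a] /=; rewrite ?ltnn pid_mx_1. Qed.

Lemma pmxS V a b : (a <= b)%N -> pmx V a b.+1 = pmx V a b *m rmap V b.
Proof. by move=> h /=; rewrite h. Qed.

Lemma pmx_pathmx V a k : pmx V a (k + a)%N = pathmx V a k.
Proof.
elim: k => [|k IH]; first exact: pmx_id.
change (pmx V a (k + a)%N.+1 = pathmx V a k *m rmap V (k + a)%N).
by rewrite pmxS ?leq_addl // IH.
Qed.

Lemma pmx_hom V W (f : hom V W) a b : is_hom f -> (a <= b)%N ->
  pmx V a b *m f b = f a *m pmx W a b.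
Proof.
move=> hf; elim: b => [|b IH]; first by rewrite leqn0 => /eqP->; rewrite !pmx_id mul1mx mulmx1.
rewrite leq_eqVlt => /orP [/eqP-> | lt]; first by rewrite !pmx_id mul1mx mulmx1.
by rewrite !pmxS // -mulmxA hf mulmxA IH // mulmxA.
Qed.

End Homomorphisms.

Section ModuleConstructions.
Variables (K : fieldType) (n : nat) (c : nat -> nat).
Local Open Scope ring_scope.
Local Notation valid := (valid_rep n c).
Local Notation projective := (projective n c).

Definition zero_rep : rep K := @Rep K (fun _ => 0%N) (fun _ => 0).

Lemma zero_rep_valid : valid zero_rep.
Proof. by split => i _ //; apply: mx_dim0_eq. Qed.

Lemma zero_rep_projective : projective zero_rep.
Proof. by move=> V W g h *; exists (fun i => 0); split => i; apply: mx_dim0_eq. Qed.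

Definition dsum_rep (V W : rep K) : rep K :=
  @Rep K (fun i => rdim V i + rdim W i)%N (fun i => block_mx (rmap V i) 0 0 (rmap W i)).

Lemma pathmx_dsum V W i k :
  pathmx (dsum_rep V W) i k = block_mx (pathmx V i k) 0 0 (pathmx W i k).
Proof.
elim: k => [|k IH] /=; first by rewrite -scalar_mx_block.
by rewrite IH mulmx_block !mulmx0 !mul0mx !addr0 !add0r.
Qed.

Lemma dsum_rep_valid V W : valid V -> valid W -> valid (dsum_rep V W).
Proof.
move=> [V0 Vrel] [W0 Wrel]; split => i hi /=; first by rewrite V0 ?W0.
by rewrite pathmx_dsum Vrel ?Wrel // block_mx0.
Qed.

Lemma dsum_rep_projective P Q : projective P -> projective Q -> projective (dsum_rep P Q).
Proof.
move=> pP pQ V W g h vV vW hg eg hh.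
pose hu : hom P W := fun i => usubmx (h i : 'M_(rdim P i + rdim Q i, _)).
pose hd : hom Q W := fun i => dsubmx (h i : 'M_(rdim P i + rdim Q i, _)).
have Eh i : h i = col_mx (hu i) (hd i) by rewrite vsubmxK.
have E i : col_mx (rmap P i *m hu i.+1) (rmap Q i *m hd i.+1) =
    col_mx (hu i *m rmap W i) (hd i *m rmap W i).
  by have := hh i; rewrite /= (Eh i.+1) (Eh i) mul_block_col mul_col_mx !mul0mx addr0 add0r.
have [hu' [hu'h hu'g]] := pP V W g hu vV vW hg eg (fun i => proj1 (eq_col_mx (E i))).
have [hd' [hd'h hd'g]] := pQ V W g hd vV vW hg eg (fun i => proj2 (eq_col_mx (E i))).
exists (fun i => col_mx (hu' i) (hd' i)); split => i /=.
  by rewrite mul_block_col mul_col_mx !mul0mx addr0 add0r hu'h hd'h.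
by rewrite mul_col_mx hu'g hd'g -Eh.
Qed.

Section Image.
Variables (V W : rep K) (g : hom V W).
Hypothesis hg : is_hom g.

Definition im_rep : rep K :=
  @Rep K (fun i => \rank (g i))
    (fun i => row_base (g i) *m rmap W i *m pinvmx (row_base (g i.+1))).
Definition im_incl : hom im_rep W := fun i => row_base (g i).
Definition im_proj : hom V im_rep := fun i => g i *m pinvmx (row_base (g i)).

Lemma im_incl_free i : row_free (im_incl i).
Proof. exact: row_base_free. Qed.

Lemma im_factor i : im_proj i *m im_incl i = g i.
Proof. by rewrite /im_proj /im_incl mulmxKpV // eq_row_base. Qed.

Lemma im_incl_hom : is_hom im_incl.
Proof.
move=> i; rewrite /im_incl /= mulmxKpV // eq_row_base.
have s1 : (row_base (g i) <= g i)%MS by rewrite eq_row_base.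
by apply: submx_trans (submxMr (rmap W i) s1) _; rewrite -hg submxMl.
Qed.

Lemma im_proj_hom : is_hom im_proj.
Proof.
move=> i; apply: (row_free_inj (im_incl_free i.+1)).
by rewrite /= -[LHS]mulmxA im_factor hg -[RHS]mulmxA im_incl_hom mulmxA im_factor.
Qed.

Lemma im_proj_epi : epi im_proj.
Proof.
move=> i; rewrite /row_full eqn_leq rank_leq_col /=.
by rewrite -{1}(im_factor i) mxrankM_maxl.
Qed.

Lemma im_rep_valid : valid W -> valid im_rep.
Proof.
move=> [W0 Wrel]; split => i hi /=.
  by apply/eqP; rewrite -leqn0 -(W0 i hi) rank_leq_col.
apply: (row_free_mul_eq0 (im_incl_free (c i + i)%N)).
have -> k : pathmx im_rep i k *m im_incl (k + i)%N = im_incl i *m pathmx W i k.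
  elim: k => [|k IH]; first by rewrite /= mul1mx mulmx1.
  change (pathmx im_rep i k *m rmap im_rep (k + i)%N *m im_incl (k + i)%N.+1 =
    im_incl i *m (pathmx W i k *m rmap W (k + i)%N)).
  by rewrite -mulmxA im_incl_hom mulmxA IH mulmxA.
by rewrite Wrel // mulmx0.
Qed.

End Image.

(* Projectivity only asks for lifts along epimorphisms; factoring g through its image
   gives lifts of every h whose image lies in that of g. *)
Lemma projective_lift_sub (P V W : rep K) (g : hom V W) (h : hom P W) :
  projective P -> valid V -> valid W -> is_hom g -> is_hom h ->
  (forall i, (h i <= g i)%MS) ->
  exists h' : hom P V, is_hom h' /\ forall i, h' i *m g i = h i.
Proof.
move=> pP vV vW hg hh sub.
pose ht : hom P (im_rep g) := fun i => h i *m pinvmx (im_incl g i).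
have htm i : ht i *m im_incl g i = h i by rewrite mulmxKpV // /im_incl eq_row_base.
have ht_hom : is_hom ht.
  move=> i; apply: (row_free_inj (im_incl_free g i.+1)).
  by rewrite /= -[LHS]mulmxA htm hh -[RHS]mulmxA (im_incl_hom hg) mulmxA htm.
have [h' [h'_hom h'e]] :=
  pP _ _ _ ht vV (im_rep_valid hg vW) (im_proj_hom hg) (im_proj_epi g) ht_hom.
by exists h'; split => // i; rewrite -(im_factor g i) mulmxA h'e htm.
Qed.

End ModuleConstructions.

Section Resolutions.
Variables (K : fieldType) (n : nat) (c : nat -> nat).
Local Open Scope ring_scope.
Local Notation valid := (valid_rep n c).
Local Notation projective := (projective n c).
Variable M : rep K.
Implicit Types (m : nat) (P : nat -> rep K).

Definition is_resolution m P (d : forall k, hom (P k.+1) (P k)) (eps : hom (P 0%N) M) :=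
  [/\ forall k, (k <= m)%N -> valid (P k) /\ projective (P k),
      forall k, (k < m)%N -> is_hom (d k),
      [/\ is_hom eps, epi eps & (0 < m)%N -> exact_at (d 0%N) eps],
      forall k, (k.+1 < m)%N -> exact_at (d k.+1) (d k)
    & if m is m'.+1 then mono (d m') else mono eps].

Definition proj_complex m P (d : forall k, hom (P k.+1) (P k)) (eps : hom (P 0%N) M) :=
  [/\ forall k, (k <= m)%N -> projective (P k),
      forall k, (k < m)%N -> is_hom (d k),
      is_hom eps,
      (0 < m)%N -> forall i, d 0%N i *m eps i = 0
    & forall k, (k.+1 < m)%N -> forall i, d k.+1 i *m d k i = 0].

Definition exact_complex m P (d : forall k, hom (P k.+1) (P k)) (eps : hom (P 0%N) M) :=
  [/\ forall k, (k <= m)%N -> valid (P k),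
      forall k, (k < m)%N -> is_hom (d k),
      [/\ is_hom eps, epi eps & (0 < m)%N -> exact_at (d 0%N) eps]
    & forall k, (k.+1 < m)%N -> exact_at (d k.+1) (d k)].

Lemma resolution_proj_complex m P (d : forall k, hom (P k.+1) (P k)) (eps : hom (P 0%N) M) :
  is_resolution m d eps -> proj_complex m d eps.
Proof.
case=> hP hd [heps _ ex0] ex _; split => // [k /hP [] | m0 i | k /ex ex_k i] //.
  exact/eqmx_ker_mul0/ex0.
exact/eqmx_ker_mul0/ex_k.
Qed.

Lemma resolution_exact_complex m P (d : forall k, hom (P k.+1) (P k)) (eps : hom (P 0%N) M) :
  is_resolution m d eps -> exact_complex m d eps.
Proof. by case=> hP hd heps ex _; split => // k /hP []. Qed.

Definition pad_rep m P k : rep K := if (k <= m)%N then P k else zero_rep K.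

Definition pad_diff m P (d : forall k, hom (P k.+1) (P k)) k :
  hom (pad_rep m P k.+1) (pad_rep m P k) :=
  if (k.+1 <= m)%N as b return hom (if b then P k.+1 else zero_rep K) (pad_rep m P k)
  then if (k <= m)%N as b' return hom (P k.+1) (if b' then P k else zero_rep K)
       then d k else fun i => 0
  else fun i => 0.

Lemma pdim_leS m : pdim_le n c M m -> pdim_le n c M m.+1.
Proof.
case=> P [d [eps [hP hd [heps eeps ex0] ex hmono]]].
exists (pad_rep m P), (pad_diff m d), eps; split.
- move=> k hk; rewrite /pad_rep; case: leqP => hkm; first exact: hP.
  by split; [apply: zero_rep_valid | apply: zero_rep_projective].
- move=> k hk; rewrite /pad_diff /pad_rep.
  case: (ltngtP k m) => hkm; first exact: hd.
    by move: hk; rewrite ltnS leqNgt hkm.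
  by move=> i /=; apply: mx_dim0_eq.
- split => // _; case: m hP hd ex0 ex hmono => [|m] hP hd ex0 ex hmono; last exact: ex0.
  by move=> i; apply: eqmx_ker0.
- move=> k hk; rewrite /pad_diff /pad_rep.
  case: (ltngtP k.+1 m) => hkm.
  + by rewrite (ltnW (ltnW hkm)); exact: ex.
  + by move: hk; rewrite ltnS leqNgt hkm.
  + by subst m; rewrite leqnSn => i; apply: eqmx_ker0.
- by rewrite /pad_diff /pad_rep ltnn leqnn => i; apply: row_free_flat.
Qed.

Lemma pdim_leW m m' : (m <= m')%N -> pdim_le n c M m -> pdim_le n c M m'.
Proof.
move=> le; rewrite -(subnK le); elim: (m' - m)%N => [|k IH] //= h.
by rewrite addSn; apply/pdim_leS/IH.
Qed.

End Resolutions.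

Section Comparison.
Variables (K : fieldType) (n : nat) (c : nat -> nat).
Local Open Scope ring_scope.
Variables (S T : rep K) (f : hom S T) (m : nat).
Variables (X : nat -> rep K) (dX : forall k, hom (X k.+1) (X k)) (eX : hom (X 0%N) S).
Variables (Y : nat -> rep K) (dY : forall k, hom (Y k.+1) (Y k)) (eY : hom (Y 0%N) T).
Hypotheses (hX : proj_complex n c m dX eX) (hY : exact_complex n c m dY eY).
Hypotheses (vT : valid_rep n c T) (hf : is_hom f).

Definition lifts_base (a : hom (X 0%N) (Y 0%N)) :=
  is_hom a /\ forall i, a i *m eY i = eX i *m f i.

Definition lifts_step k (a : hom (X k) (Y k)) (a' : hom (X k.+1) (Y k.+1)) :=
  is_hom a' /\ forall i, dX k i *m a i = a' i *m dY k i.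

Fixpoint chain_lift k : hom (X k) (Y k) :=
  match k with
  | 0 => epsilon (inhabits (fun=> 0)) lifts_base
  | k'.+1 => epsilon (inhabits (fun=> 0)) (lifts_step (chain_lift k'))
  end.

Lemma chain_lift_base : lifts_base (chain_lift 0).
Proof.
apply: epsilon_spec; case: hX => hXp _ hXe _ _; case: hY => hYv _ [hYe hYepi _] _.
have [a [a_hom ea]] :=
  hXp 0%N (leq0n m) _ _ _ _ (hYv 0%N (leq0n m)) vT hYe hYepi (is_hom_comp hXe hf).
by exists a.
Qed.

Lemma chain_lift_step k : (k < m)%N -> lifts_step (chain_lift k) (chain_lift k.+1).
Proof.
elim: k => [|k IH] hk /=; apply: epsilon_spec;
  case: hX => hXp hXd _ hXd0 hXdd; case: hY => hYv hYd [_ _ ex0] ex.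
- have [a0_hom ea0] := chain_lift_base.
  have sub i : (dX 0%N i *m chain_lift 0 i <= dY 0%N i)%MS.
    by apply: (eqmx_ker_sub (ex0 hk i)); rewrite -mulmxA ea0 mulmxA hXd0 // mul0mx.
  have [a' [a'_hom ea']] := projective_lift_sub (hXp _ hk) (hYv _ hk) (hYv _ (leq0n m))
    (hYd _ hk) (is_hom_comp (hXd _ hk) a0_hom) sub.
  by exists a'; split => // i; rewrite ea'.
- have [ak_hom eak] := IH (ltnW hk).
  have sub i : (dX k.+1 i *m chain_lift k.+1 i <= dY k.+1 i)%MS.
    by apply: (eqmx_ker_sub (ex _ hk i)); rewrite -mulmxA -eak mulmxA hXdd // mul0mx.
  have [a' [a'_hom ea']] := projective_lift_sub (hXp _ hk) (hYv _ hk) (hYv _ (ltnW hk))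
    (hYd _ hk) (is_hom_comp (hXd _ hk) ak_hom) sub.
  by exists a'; split => // i; rewrite ea'.
Qed.

Lemma comparison : exists a : forall k, hom (X k) (Y k),
  [/\ forall k, (k <= m)%N -> is_hom (a k),
      forall i, a 0%N i *m eY i = eX i *m f i
    & forall k, (k < m)%N -> forall i, dX k i *m a k i = a k.+1 i *m dY k i].
Proof.
exists chain_lift; split; last by move=> k /chain_lift_step [].
  by case=> [_|k /chain_lift_step []]; [case: chain_lift_base|].
by case: chain_lift_base.
Qed.

End Comparison.

Section KupischSeries.
Variables (n : nat) (c : nat -> nat).
Hypothesis hc : kupisch n c.

Lemma kupisch_pos i : i < n -> 0 < c i.
Proof. by case: hc => h _ _; apply: h. Qed.

Lemma kupisch_step i : i.+1 < n -> c i <= (c i.+1).+1.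
Proof. by case: hc => _ h _; apply: h. Qed.

Lemma kupisch_bound i : i < n -> c i + i <= n.
Proof.
move=> hi; have [k ->] : exists k, i = n.-1 - k by exists (n.-1 - i); lia.
elim: k => [|k IH]; first by case: hc => _ _ e; rewrite subn0 e; lia.
case: (ltnP k n.-1) => hk; last by rewrite (_ : n.-1 - k.+1 = n.-1 - k) //; lia.
have := @kupisch_step (n.-1 - k.+1); rewrite (_ : (n.-1 - k.+1).+1 = n.-1 - k); last lia.
by move=> /(_ ltac:(lia)); lia.
Qed.

(* The parent map of the tree tau(A), whose root is n. *)
Definition par u := if u < n then u + c u else u.

Lemma par_le u : u <= n -> par u <= n.
Proof. by rewrite /par; case: ifP => // h _; have := kupisch_bound h; lia. Qed.

Lemma par_gt u : u < n -> u < par u.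
Proof. by move=> h; rewrite /par h; have := kupisch_pos h; lia. Qed.

Lemma par_mono u v : u <= v -> v <= n -> par u <= par v.
Proof.
move=> uv vn; have [k ->] : exists k, v = u + k by exists (v - u); lia.
elim: k vn {uv} => [|k IH] vn; first by rewrite addn0.
apply: leq_trans (IH ltac:(lia)) _; rewrite addnS /par.
case: ifP => [h|]; last by case: ifP => //; lia.
case: ifP => h1; first by have := kupisch_step h1; lia.
by have := kupisch_bound h; lia.
Qed.

Section Zigzag.
Variable j : nat.
Hypothesis hj : j < n.

(* x_0 = j, x_1 = j+1 and x_(k+2) = par x_k: the ancestors of j and j+1, interleaved. *)
Definition xseq k := iter k./2 par (j + odd k).

Lemma xseqSS k : xseq k.+2 = par (xseq k).
Proof. by rewrite /xseq /= negbK. Qed.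

Lemma xseq_double s : xseq s.*2 = iter s par j.
Proof. by rewrite /xseq doubleK odd_double addn0. Qed.

Lemma xseq_double1 s : xseq s.*2.+1 = iter s par j.+1.
Proof. by rewrite /xseq /= uphalf_double odd_double addn1. Qed.

Lemma xseq_step k : [/\ xseq k <= xseq k.+1, xseq k.+1 <= par (xseq k) & xseq k.+1 <= n].
Proof.
elim: k => [|k [h1 h2 h3]]; first by rewrite /xseq /= addn0 addn1; split => //; apply: par_gt.
by rewrite xseqSS; split => //; [apply: par_mono | apply: par_le]; lia.
Qed.

Lemma xseq_le k : xseq k <= n.
Proof. by case: k => [|k]; [rewrite /xseq /= addn0; lia | case: (xseq_step k)]. Qed.

Lemma xseq_mono a b : a <= b -> xseq a <= xseq b.
Proof.
move=> ab; have [k ->] : exists k, b = a + k by exists (b - a); lia.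
elim: k {ab} => [|k IH]; first by rewrite addn0.
by rewrite addnS; case: (xseq_step (a + k)) => h _ _; lia.
Qed.

Lemma xseq_stops : has (fun k => xseq k == xseq k.+1) (iota 0 n.+1).
Proof.
apply/negPn/negP => /hasPn H.
suff /(_ n.+1 (leqnn _)) : forall k, k <= n.+1 -> j + k <= xseq k by have := xseq_le n.+1; lia.
elim=> [|k IH] hk; first by rewrite /xseq /= !addn0.
have ne := H k ltac:(rewrite mem_iota; lia).
case: (xseq_step k) => h1 _ _.
have : xseq k < xseq k.+1 by rewrite ltn_neqAle ne h1.
have := IH ltac:(lia); lia.
Qed.

Definition xstop := find (fun k => xseq k == xseq k.+1) (iota 0 n.+1).

Lemma xstop_le : xstop <= n.
Proof. by rewrite -ltnS -(size_iota 0 n.+1) -has_find xseq_stops. Qed.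

Lemma xstop_eq : xseq xstop = xseq xstop.+1.
Proof. by have := nth_find 0 xseq_stops; rewrite nth_iota ?add0n ?ltnS ?xstop_le // => /eqP. Qed.

Lemma xseq_ltS k : k < xstop -> xseq k < xseq k.+1.
Proof.
move=> hk; have := before_find 0 hk; rewrite nth_iota ?add0n; last first.
  by apply: leq_trans hk _; have := xstop_le; lia.
by case: (xseq_step k) => h1 _ _ /negbT ne; rewrite ltn_neqAle ne.
Qed.

Lemma xstop_gt0 : 0 < xstop.
Proof. by rewrite lt0n; apply/eqP => e; have := xstop_eq; rewrite e /xseq /= addn0 addn1; lia. Qed.

Lemma xseq_lt a b : a < b -> a < xstop -> xseq a < xseq b.
Proof. by move=> ab aK; have := xseq_ltS aK; have := xseq_mono ab; lia. Qed.

Lemma xseq_lt_n k : k < xstop -> xseq k < n.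
Proof. by move=> h; have := xseq_ltS h; have := xseq_le k.+1; lia. Qed.

End Zigzag.
End KupischSeries.

Lemma find_iota_eq (p : pred nat) N k :
  k < N -> p k -> (forall k', k' < k -> ~~ p k') -> find p (iota 0 N) = k.
Proof.
move=> kN pk H.
have hp : has p (iota 0 N) by apply/hasP; exists k => //; rewrite mem_iota; lia.
have fN : find p (iota 0 N) < N by move: hp; rewrite has_find size_iota.
case: (ltngtP (find p (iota 0 N)) k) => // h.
  by have := nth_find 0 hp; rewrite nth_iota // add0n (negbTE (H _ h)).
by have := before_find 0 h; rewrite nth_iota ?add0n ?pk //; lia.
Qed.

Section TreeDistance.
Variables (n : nat) (c : nat -> nat).
Hypothesis hc : kupisch n c.
Local Notation par := (par n c).
Local Notation treach := (treach n c).

Lemma tadjP u v : tadj n c u v -> (u < n /\ v = par u) \/ (v < n /\ u = par v).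
Proof.
by rewrite /tadj /par => /orP [/andP [h /eqP e] | /andP [h /eqP e]]; [left | right]; rewrite h.
Qed.

Lemma treach_common_ancestor k u v : treach k u v ->
  exists s t, iter s par u = iter t par v /\ s + t <= k.
Proof.
elim: k u => [|k IH] u; first by move=> /eqP ->; exists 0, 0.
case/hasP => w _ /andP [/tadjP adj /IH [s [t [e le]]]].
case: adj => [[hu ew] | [hw eu]]; first by exists s.+1, t; rewrite iterSr -ew; split => //; lia.
case: s e le => [|s] e le; first by exists 0, t.+1; rewrite /= eu -e; split => //; lia.
by exists s, t; rewrite -e iterSr -eu; split => //; lia.
Qed.

Lemma treach_cat a b u w v : treach a u w -> treach b w v -> treach (a + b) u v.
Proof.
elim: a u => [|a IH] u; first by move=> /eqP ->.
case/hasP => w' hw' /andP [h1 h2] r; apply/hasP; exists w' => //.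
by rewrite h1; exact: IH h2 r.
Qed.

Lemma treach_par u : u < n -> treach 1 u (par u) /\ treach 1 (par u) u.
Proof.
move=> h; have pn : par u \in iota 0 n.+1 by rewrite mem_iota; have := par_le hc (ltnW h); lia.
have un : u \in iota 0 n.+1 by rewrite mem_iota; lia.
split; apply/hasP; [exists (par u) | exists u] => //=;
  by rewrite eqxx /tadj /par h eqxx ?orbT.
Qed.

Lemma treach_iter_par a u : u <= n -> (forall s, s < a -> iter s par u < n) ->
  treach a u (iter a par u) /\ treach a (iter a par u) u.
Proof.
move=> un; elim: a => [|a IH] H; first by split; apply: eqxx.
have [up dn] := IH (fun s hs => H s (ltnW hs)).
have [up1 dn1] := treach_par (H a (ltnSn a)).
split; first by have := treach_cat up up1; rewrite addn1.
by have := treach_cat dn1 dn; rewrite add1n.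
Qed.

Section Neighbours.
Variable j : nat.
Hypothesis hj : j < n.
Local Notation xstop := (xstop n c j).

Lemma treach_via_ancestor a b : iter a par j = iter b par j.+1 ->
  a.*2 <= xstop.+1 -> b.*2 <= xstop -> treach (a + b) j j.+1.
Proof.
move=> meet; rewrite -!muln2 => ha hb.
have up s : s < a -> iter s par j < n.
  by move=> hs; rewrite -xseq_double; apply: (xseq_lt_n hc hj); rewrite -muln2; lia.
have dn s : s < b -> iter s par j.+1 < n.
  by move=> hs; rewrite -xseq_double1; apply: (xseq_lt_n hc hj); rewrite -muln2; lia.
apply: (treach_cat (proj1 (treach_iter_par (ltnW hj) up))).
by rewrite meet; exact: (proj2 (treach_iter_par hj dn)).
Qed.

Lemma treach_xstop : treach xstop j j.+1.
Proof.
have eK := odd_double_half xstop; set h := xstop./2 in eK.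
case: (odd xstop) eK => [|]; rewrite ?add1n ?add0n => eK.
  have meet : iter h.+1 par j = iter h par j.+1.
    by rewrite -xseq_double -xseq_double1 doubleS eK xstop_eq.
  have := treach_via_ancestor meet; rewrite addSn addnn eK.
  by apply; rewrite -eK ?doubleS.
have meet : iter h par j = iter h par j.+1.
  by rewrite -xseq_double -xseq_double1 eK xstop_eq.
have := treach_via_ancestor meet; rewrite addnn eK.
by apply; rewrite -eK.
Qed.

Lemma treach_lt_xstop k : k < xstop -> ~~ treach k j j.+1.
Proof.
move=> hk; apply/negP => /treach_common_ancestor [s [t []]].
rewrite -xseq_double -xseq_double1 => e le.
case: (leqP s t) => st.
  by have := xseq_lt hc hj (a := s.*2) (b := t.*2.+1); lia.
by have := xseq_lt hc hj (a := t.*2.+1) (b := s.*2); lia.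
Qed.

Lemma tdist_xstop : tdist n c j j.+1 = xstop.
Proof.
apply: find_iota_eq; [by rewrite ltnS xstop_le | exact: treach_xstop |].
by move=> k; apply: treach_lt_xstop.
Qed.

End Neighbours.
End TreeDistance.

Ltac interval_arith := rewrite /=; repeat (case: ifP => ?); lia.

Section IntervalModules.
Variables (K : fieldType) (n : nat) (c : nat -> nat).
Hypothesis hc : kupisch n c.
Local Open Scope ring_scope.
Local Notation par := (par n c).

(* D copies of the uniserial module with composition factors S_a, ..., S_(b-1). *)
Definition interval_rep (a b D : nat) : rep K :=
  @Rep K (fun i => if (a <= i < b)%N then D else 0%N) (fun i => pid_mx D).

Lemma pmx_interval a b D u v : (u <= v)%N ->
  pmx (interval_rep a b D) u v = pid_mx (if (a <= u)%N && (v < b)%N then D else 0%N).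
Proof.
elim: v => [|v IH].
  by rewrite leqn0 => /eqP ->; rewrite pmx_id -pid_mx_1; apply: eq_pid_mx; interval_arith.
rewrite leq_eqVlt => /orP [/eqP -> | lt].
  by rewrite pmx_id -pid_mx_1; apply: eq_pid_mx; interval_arith.
by rewrite pmxS // IH // mul_pid_mx; apply: eq_pid_mx; interval_arith.
Qed.

Lemma interval_rep_valid a b D : (b <= par a)%N -> (b <= n)%N ->
  valid_rep n c (interval_rep a b D).
Proof.
move=> hb hbn; split => i hi; first by interval_arith.
rewrite -pmx_pathmx pmx_interval ?leq_addl //; apply: pid_mx_eq0.
have : (a <= i)%N -> (b <= c i + i)%N.
  by move=> ai; have := par_mono hc ai (ltnW hi); rewrite {2}/par hi; lia.
by interval_arith.
Qed.

Lemma is_hom_pid_interval a b a' b' D : (a' <= a)%N -> (b' <= b)%N ->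
  is_hom (fun i => pid_mx D : 'M[K]_(rdim (interval_rep a b D) i, rdim (interval_rep a' b' D) i)).
Proof. by move=> h1 h2 i; rewrite /= !mul_pid_mx; apply: eq_pid_mx; interval_arith. Qed.

(* D copies of the indecomposable projective e_a A: a lift is determined by a lift X
   of the image of the generators at vertex a. *)
Lemma interval_rep_projective a D : (a < n)%N -> projective n c (interval_rep a (par a) D).
Proof.
move=> an V W g h vV vW hg eg hh.
have /submxP [X eX] : (h a <= g a)%MS by apply: submx_full.
set P := interval_rep a (par a) D.
have hpa : par a = (c a + a)%N by rewrite /par an addnC.
exists (fun i => (pid_mx D : 'M_(rdim P i, rdim P a)) *m X *m pmx V a i); split.
  move=> i; case: (ltnP i a) => ia; first by apply: mx_dim0_eq; interval_arith.
  case: (ltnP i.+1 (par a)) => ip.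
    by rewrite pmxS // !mulmxA /= mul_pid_mx (@eq_pid_mx _ _ _ _ D) //; interval_arith.
  case: (ltnP i (par a)) => ip2; last by apply: mx_dim0_eq; interval_arith.
  have E : pmx V a i.+1 = 0 by rewrite (_ : i.+1 = c a + a)%N ?pmx_pathmx; [case: vV => _ ->|lia].
  by rewrite -[RHS]mulmxA -pmxS // E !mulmx0.
move=> i; case: (ltnP i a) => ia; first by apply: mx_dim0_eq; interval_arith.
rewrite -!mulmxA (pmx_hom hg) // (mulmxA X) -eX -(pmx_hom hh) // mulmxA.
rewrite pmx_interval // mul_pid_mx -[RHS]mul1mx; congr (_ *m _).
by rewrite -pid_mx_1; apply: eq_pid_mx; interval_arith.
Qed.

End IntervalModules.

Section ConcentratedModules.
Variables (K : fieldType) (n : nat) (c : nat -> nat).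
Hypothesis hc : kupisch n c.
Variable j : nat.
Hypothesis hj : (j < n)%N.
Variable N : rep K.
Hypothesis hN : forall i, i != j -> rdim N i = 0%N.
Local Open Scope ring_scope.
Local Notation x := (xseq n c j).
Local Notation xstop := (xstop n c j).
Local Notation D := (rdim N j).

Lemma rdim_concentrated i : rdim N i = if i == j then D else 0%N.
Proof. by case: eqP => [->|/eqP/hN]. Qed.

Definition res_rep k : rep K := interval_rep K (x k) (x k.+2) D.
Definition res_diff k : hom (res_rep k.+1) (res_rep k) := fun i => pid_mx D.
Definition res_aug : hom (res_rep 0) N := fun i => pid_mx D.

Lemma xseq_chain k : [/\ (x k <= x k.+1)%N, (x k.+1 <= x k.+2)%N & (x k.+2 <= n)%N].
Proof.
rewrite xseqSS; case: (xseq_step hc hj k) => h1 h2 _.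
by split => //; apply: par_le (xseq_le hc hj k).
Qed.

Lemma xseq_first : [/\ x 0 = j, x 1 = j.+1, x 2 = par n c j & x 3 = par n c j.+1].
Proof. by rewrite /xseq /= addn0 addn1. Qed.

Lemma res_rep_valid k : valid_rep n c (res_rep k).
Proof.
case: (xseq_chain k) => _ _ h.
by rewrite /res_rep; apply: (interval_rep_valid _ hc); rewrite -?xseqSS.
Qed.

Lemma res_rep_projective k : (k < xstop)%N -> projective n c (res_rep k).
Proof. by move=> hk; rewrite /res_rep xseqSS; apply/interval_rep_projective/(xseq_lt_n hc hj). Qed.

Lemma res_diff_hom k : is_hom (res_diff k).
Proof. by case: (xseq_chain k) (xseq_chain k.+1) => ? ? ? [? ? ?]; apply: is_hom_pid_interval. Qed.

Lemma res_exact k : exact_at (res_diff k.+1) (res_diff k).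
Proof.
case: (xseq_chain k) (xseq_chain k.+1) (xseq_chain k.+2) => ? ? ? [? ? ?] [? ? ?].
by move=> i; apply: eqmx_ker_pid_mx; interval_arith.
Qed.

Lemma res_aug_facts :
  [/\ is_hom res_aug, epi res_aug & exact_at (res_diff 0) res_aug].
Proof.
have [x0 x1 x2 x3] := xseq_first.
have lt_j := par_gt hc hj; have le_par := par_mono hc (leqnSn j) hj.
split=> i.
- by apply: mx_dim0_eq; rewrite (rdim_concentrated i.+1) /= x0 x2; interval_arith.
- by apply: row_full_pid_mx; rewrite (rdim_concentrated i) /= x0 x2; interval_arith.
- by apply: eqmx_ker_pid_mx; rewrite (rdim_concentrated i) /= x0 x1 x2 x3; interval_arith.
Qed.

Lemma res_is_resolution : is_resolution n c (xstop - 1) res_diff res_aug.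
Proof.
have := xstop_gt0 hc hj; have := xstop_eq hc hj; have [a_hom a_epi a_ex] := res_aug_facts.
move=> stop pos; split => //.
- by move=> k hk; split; [exact: res_rep_valid | apply: res_rep_projective; lia].
- by move=> k _; apply: res_diff_hom.
- by move=> k _; apply: res_exact.
case E: (xstop - 1)%N => [|m] i; last first.
  have {}stop : x m.+2 = x m.+3 by rewrite (_ : m.+2 = xstop) //; lia.
  case: (xseq_chain m) (xseq_chain m.+1) (xseq_chain m.+2) => ? ? ? [? ? ?] [? ? ?].
  by apply: row_free_pid_mx; interval_arith.
have [x0 x1 _ _] := xseq_first.
have {}stop : x 1 = x 2 by rewrite (_ : 1%N = xstop) //; lia.
by apply: row_free_pid_mx; rewrite (rdim_concentrated i) /= x0 -stop x1; interval_arith.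
Qed.

Lemma pdim_le_concentrated : pdim_le n c N (xstop - 1).
Proof. by exists res_rep, res_diff, res_aug; exact: res_is_resolution. Qed.

Lemma res_proj_complex m : (m < xstop)%N -> proj_complex n c m res_diff res_aug.
Proof.
have [a_hom _ a_ex] := res_aug_facts.
move=> hm; split => // [k hk | k _ | _ i | k _ i].
- by apply: res_rep_projective; lia.
- exact: res_diff_hom.
- exact: eqmx_ker_mul0 (a_ex i).
- exact: eqmx_ker_mul0 (res_exact k i).
Qed.

Lemma res_exact_complex m : exact_complex n c m res_diff res_aug.
Proof.
have [a_hom a_epi a_ex] := res_aug_facts.
by split => // [k _ | k _ | k _]; [exact: res_rep_valid | exact: res_diff_hom | exact: res_exact].
Qed.

Lemma rdim_res_rep k v : rdim (res_rep k) v = if (x k <= v < x k.+2)%N then D else 0%N.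
Proof. by []. Qed.

Section ChainEndomorphism.
Variable m : nat.
Hypothesis hm : (m.+1 < xstop)%N.
Variable ga : forall k, hom (res_rep k) (res_rep k).
Hypotheses (ga_hom : forall k, (k <= m)%N -> is_hom (ga k))
  (ga_base : forall i, ga 0%N i *m res_aug i = res_aug i)
  (ga_step : forall k, (k < m)%N ->
     forall i, res_diff k i *m ga k i = ga k.+1 i *m res_diff k i).

Let xlt k : (k <= m.+1)%N -> (x k < x k.+1)%N.
Proof. by move=> hk; apply: (xseq_ltS hc hj); lia. Qed.

Lemma rank_res_endo_le k v : (\rank (ga k v) <= D)%N.
Proof. by apply: leq_trans (rank_leq_row _) _; rewrite rdim_res_rep; case: ifP. Qed.

Lemma rank_res_endo0 : \rank (ga 0%N j) = D.
Proof.
have [x0 _ x2 _] := xseq_first; have lt_j := par_gt hc hj.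
apply/eqP; rewrite eqn_leq rank_res_endo_le /=.
have r : \rank (res_aug j) = D by rewrite mxrank_pid /= x0 x2 (rdim_concentrated j); interval_arith.
by rewrite -[X in (X <= _)%N]r -{1}ga_base mxrankM_maxl.
Qed.

Lemma rank_res_endo_up k : (k <= m)%N ->
  \rank (ga k (x k)) = D -> \rank (ga k (x k.+1)) = D.
Proof.
move=> hk r; have lt1 := xlt (leqW hk); have lt2 := xlt (k := k.+1) hk.
have E : pmx (res_rep k) (x k) (x k.+1) = pid_mx D.
  by rewrite pmx_interval ?(ltnW lt1) //; apply: eq_pid_mx; rewrite !rdim_res_rep; interval_arith.
have free : row_free (pmx (res_rep k) (x k) (x k.+1)).
  by rewrite E; apply: row_free_pid_mx; rewrite !rdim_res_rep; interval_arith.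
apply/eqP; rewrite eqn_leq rank_res_endo_le /= -[X in (X <= _)%N]r -(mxrankMfree _ free).
by rewrite -(pmx_hom (ga_hom hk) (ltnW lt1)) mxrankM_maxr.
Qed.

Lemma rank_res_endo_shift k : (k < m)%N ->
  \rank (ga k (x k.+1)) = D -> \rank (ga k.+1 (x k.+1)) = D.
Proof.
move=> hk r; have lt := xlt (k := k.+1) (ltnW hk).
case: (xseq_chain k) (xseq_chain k.+1) => ? ? ? [? ? ?].
have full : row_full (res_diff k (x k.+1)).
  by apply: row_full_pid_mx; rewrite !rdim_res_rep; interval_arith.
apply/eqP; rewrite eqn_leq rank_res_endo_le /= -[X in (X <= _)%N]r -(mxrank_full_mul _ full).
by rewrite ga_step // mxrankM_maxl.
Qed.

Lemma rank_res_endo_top : \rank (ga m (x m.+1)) = D.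
Proof.
apply: rank_res_endo_up => //.
suff : forall k, (k <= m)%N -> \rank (ga k (x k)) = D by apply.
elim=> [|k IH] hk; first by case: xseq_first => -> _ _ _; exact: rank_res_endo0.
by apply: rank_res_endo_shift => //; apply: rank_res_endo_up; [lia | apply: IH; lia].
Qed.

End ChainEndomorphism.

(* A resolution of length m ends with a monomorphism, so a chain map from res_rep
   into it kills the image of res_diff m. *)
Lemma chain_map_top_eq0 m P (d : forall k, hom (P k.+1) (P k)) (eps : hom (P 0%N) N)
    (al : forall k, hom (res_rep k) (P k)) :
  (m.+1 < xstop)%N -> is_resolution n c m d eps ->
  (forall i, al 0%N i *m eps i = res_aug i *m 1%:M) ->
  (forall k, (k < m)%N -> forall i, res_diff k i *m al k i = al k.+1 i *m d k i) ->
  al m (x m.+1) = 0.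
Proof.
move=> hm [_ _ _ _ mono_end] al_base al_step.
have h0 : res_diff m (x m.+1) *m al m (x m.+1) = 0.
  case: m hm mono_end al_step => [|m] hm mono_end al_step.
    have [_ _ ex0] := res_aug_facts; apply: (row_free_mul_eq0 (mono_end (x 1))).
    by rewrite -mulmxA al_base mulmx1 (eqmx_ker_mul0 (ex0 _)).
  apply: (row_free_mul_eq0 (mono_end (x m.+2))).
  by rewrite -mulmxA -al_step // mulmxA (eqmx_ker_mul0 (res_exact _ _)) mul0mx.
have full : row_full (res_diff m (x m.+1)).
  have lt := xseq_ltS hc hj (k := m.+1) ltac:(lia).
  case: (xseq_chain m) (xseq_chain m.+1) => ? ? ? [? ? ?].
  by apply: row_full_pid_mx; rewrite !rdim_res_rep; interval_arith.
by apply/eqP; rewrite -mxrank_eq0 -(mxrank_full_mul _ full) h0 mxrank0.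
Qed.

Lemma pdim_le_concentrated_ge m : valid_rep n c N -> (0 < D)%N ->
  pdim_le n c N m -> (xstop - 1 <= m)%N.
Proof.
move=> vN D_gt0 [P [d [eps res]]]; rewrite leqNgt; apply/negP => lt_m.
have hm : (m.+1 < xstop)%N by lia.
have [al [al_hom al_base al_step]] := comparison (res_proj_complex (ltnW hm))
  (resolution_exact_complex res) vN (is_hom_id N).
have [be [be_hom be_base be_step]] := comparison (resolution_proj_complex res)
  (res_exact_complex m) vN (is_hom_id N).
pose ga k i := al k i *m be k i.
have rk : \rank (ga m (x m.+1)) = D.
  apply: rank_res_endo_top => // [k hk | i | k hk i].
  - by apply: is_hom_comp; [apply: al_hom | apply: be_hom].
  - by rewrite /ga -mulmxA be_base mulmx1 al_base mulmx1.
  - by rewrite /ga mulmxA al_step // -mulmxA be_step // mulmxA.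
by move: rk; rewrite /ga (chain_map_top_eq0 hm res al_base al_step) mul0mx mxrank0; lia.
Qed.

End ConcentratedModules.

Section Horseshoe.
Variables (K : fieldType) (n : nat) (c : nat -> nat).
Local Open Scope ring_scope.
Local Notation valid := (valid_rep n c).
Variables (M1 M M2 : rep K) (io : hom M1 M) (pi : hom M M2).
Hypotheses (vM : valid M) (io_hom : is_hom io) (io_mono : mono io) (exM : exact_at io pi).
Variables (m : nat) (P1 P2 : nat -> rep K).
Variables (d1 : forall k, hom (P1 k.+1) (P1 k)) (e1 : hom (P1 0%N) M1).
Variables (d2 : forall k, hom (P2 k.+1) (P2 k)) (e2 : hom (P2 0%N) M2).
Hypotheses (res1 : is_resolution n c m d1 e1) (res2 : is_resolution n c m d2 e2).
Variable tau : hom (P2 0%N) M.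
Hypotheses (tau_hom : is_hom tau) (tau_lift : forall i, tau i *m pi i = e2 i).

Definition horse_base : hom (P1 0%N) M := fun i => e1 i *m io i.

(* Lower-left blocks of the horseshoe differentials; the sign makes the block
   differentials compose to zero. *)
Definition horse_conn_base (s : hom (P2 1) (P1 0%N)) :=
  is_hom s /\ forall i, s i *m horse_base i = - (d2 0%N i *m tau i).

Definition horse_conn_step k (s : hom (P2 k.+1) (P1 k)) (s' : hom (P2 k.+2) (P1 k.+1)) :=
  is_hom s' /\ forall i, s' i *m d1 k i = - (d2 k.+1 i *m s i).

Fixpoint horse_conn k : hom (P2 k.+1) (P1 k) :=
  match k with
  | 0 => epsilon (inhabits (fun=> 0)) horse_conn_base
  | k'.+1 => epsilon (inhabits (fun=> 0)) (horse_conn_step (horse_conn k'))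
  end.

Lemma horse_conn0 : (0 < m)%N -> horse_conn_base (horse_conn 0).
Proof.
move=> m_gt0; apply: epsilon_spec.
case: res1 => hP1 _ [e1_hom e1_epi _] _ _; case: res2 => hP2 hd2 _ _ _.
have [_ _ _ d2e2 _] := resolution_proj_complex res2.
have sub i : (- (d2 0%N i *m tau i) <= horse_base i)%MS.
  apply: submx_trans (_ : io i <= _)%MS.
    apply: (eqmx_ker_sub (exM i)).
    by rewrite mulNmx -mulmxA tau_lift d2e2 // oppr0.
  by rewrite /horse_base -{1}(mul1mx (io i)) submxMr // sub1mx.
have [s [s_hom es]] := projective_lift_sub (proj2 (hP2 _ m_gt0)) (proj1 (hP1 _ (leq0n m)))
  vM (is_hom_comp e1_hom io_hom) (is_hom_opp (is_hom_comp (hd2 _ m_gt0) tau_hom)) sub.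
by exists s.
Qed.

Lemma horse_conn_lift k (s : hom (P2 k.+1) (P1 k)) : (k.+1 < m)%N -> is_hom s ->
  (forall i, (- (d2 k.+1 i *m s i) <= d1 k i)%MS) -> exists s', horse_conn_step s s'.
Proof.
move=> hk s_hom sub; case: res1 => hP1 hd1 _ _ _; case: res2 => hP2 hd2 _ _ _.
have [s' [s'_hom es']] := projective_lift_sub (proj2 (hP2 _ hk)) (proj1 (hP1 _ (ltnW hk)))
  (proj1 (hP1 _ (ltnW (ltnW hk)))) (hd1 _ (ltnW hk))
  (is_hom_opp (is_hom_comp (hd2 _ hk) s_hom)) sub.
by exists s'.
Qed.

Lemma horse_connS k : (k.+1 < m)%N -> horse_conn_step (horse_conn k) (horse_conn k.+1).
Proof.
have [_ _ _ _ d2d2] := resolution_proj_complex res2.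
case: res1 => _ _ [_ _ ex10] ex1 _.
elim: k => [|k IH] hk; apply: epsilon_spec.
  have [s_hom es] := horse_conn0 (ltnW hk).
  apply: horse_conn_lift => // i; apply: (eqmx_ker_sub (ex10 (ltnW hk) i)).
  apply: (row_free_mul_eq0 (io_mono i)).
  by rewrite -mulmxA -/(horse_base i) mulNmx -mulmxA es mulmxN opprK mulmxA d2d2 // mul0mx.
have [s_hom es] := IH (ltnW hk).
apply: horse_conn_lift => // i; apply: (eqmx_ker_sub (ex1 _ (ltnW hk) i)).
by rewrite mulNmx -mulmxA es mulmxN opprK mulmxA d2d2 // mul0mx.
Qed.

Lemma horse_conn_hom k : (k < m)%N -> is_hom (horse_conn k).
Proof. by case: k => [/horse_conn0 [] | k /horse_connS []]. Qed.

Definition horse_rep k : rep K := dsum_rep (P1 k) (P2 k).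
Definition horse_diff k : hom (horse_rep k.+1) (horse_rep k) :=
  fun i => block_mx (d1 k i) 0 (horse_conn k i) (d2 k i).
Definition horse_aug : hom (horse_rep 0) M := fun i => col_mx (horse_base i) (tau i).

Lemma horse_diff_hom k : (k < m)%N -> is_hom (horse_diff k).
Proof.
move=> hk i; case: res1 => _ hd1 _ _ _; case: res2 => _ hd2 _ _ _.
rewrite /horse_diff /= !mulmx_block !mulmx0 !mul0mx !addr0 !add0r.
by rewrite (hd1 _ hk) (hd2 _ hk) (horse_conn_hom hk).
Qed.

Lemma horse_aug_hom : is_hom horse_aug.
Proof.
move=> i; case: res1 => _ _ [e1_hom _ _] _ _.
rewrite /horse_aug /= mul_block_col mul_col_mx !mul0mx addr0 add0r.
by rewrite /horse_base mulmxA e1_hom -!mulmxA io_hom tau_hom.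
Qed.

Lemma horse_aug_epi : epi horse_aug.
Proof.
move=> i; case: res1 => _ _ [_ e1_epi _] _ _; case: res2 => _ _ [_ e2_epi _] _ _.
rewrite -sub1mx; apply/rV_subP => w _.
have /submxP [z ez] : (w *m pi i <= e2 i)%MS by apply: submx_full.
have /submxP [u eu] : (w - z *m tau i <= io i)%MS.
  by apply: (eqmx_ker_sub (exM i)); rewrite mulmxBl -mulmxA tau_lift ez subrr.
have /submxP [y ey] : (u <= e1 i)%MS by apply: submx_full.
apply/submxP; exists (row_mx y z); rewrite /horse_aug mul_row_col.
by rewrite /horse_base mulmxA -ey -eu subrK.
Qed.

Lemma horse_aug_ker i (y : 'rV[K]_(rdim (P1 0%N) i)) (z : 'rV[K]_(rdim (P2 0%N) i)) :
  y *m horse_base i + z *m tau i = 0 -> z *m e2 i = 0.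
Proof.
move=> /(congr1 (mulmx^~ (pi i))); rewrite mulmxDl mul0mx /horse_base !mulmxA.
by rewrite -(mulmxA _ (io i)) (eqmx_ker_mul0 (exM i)) mulmx0 add0r -mulmxA tau_lift.
Qed.

Lemma horse_exact0 : (0 < m)%N -> exact_at (horse_diff 0) horse_aug.
Proof.
move=> m_gt0 i; have [_ es] := horse_conn0 m_gt0.
case: res1 => _ _ [_ _ ex10] _ _; case: res2 => _ _ [_ _ ex20] _ _.
apply: eqmx_ker_rV.
  rewrite /horse_diff /horse_aug mul_block_col mul0mx addr0 es /horse_base mulmxA.
  by rewrite (eqmx_ker_mul0 (ex10 m_gt0 i)) mul0mx addrC subrr col_mx0.
move=> w; rewrite -(hsubmxK w) /horse_aug mul_row_col => e.
have /submxP [z' ez'] := eqmx_ker_sub (ex20 m_gt0 i) (horse_aug_ker e).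
have : ((lsubmx w - z' *m horse_conn 0 i) *m e1 i) *m io i = 0.
  by rewrite -mulmxA mulmxBl -mulmxA es mulmxN (mulmxA z') -ez' opprK e.
move/(row_free_mul_eq0 (io_mono i)) => e'.
have /submxP [y' ey'] := eqmx_ker_sub (ex10 m_gt0 i) e'.
apply/submxP; exists (row_mx y' z'); rewrite /horse_diff mul_row_block mulmx0 add0r.
by rewrite -ey' -ez' subrK.
Qed.

Lemma horse_exact k : (k.+1 < m)%N -> exact_at (horse_diff k.+1) (horse_diff k).
Proof.
move=> hk i; have [_ es] := horse_connS hk.
case: res1 => _ _ _ ex1 _; case: res2 => _ _ _ ex2 _.
apply: eqmx_ker_rV.
  rewrite /horse_diff mulmx_block !mulmx0 !mul0mx !addr0 add0r (eqmx_ker_mul0 (ex1 _ hk i)).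
  by rewrite (eqmx_ker_mul0 (ex2 _ hk i)) es addrC subrr block_mx0.
move=> w; rewrite -(hsubmxK w) /horse_diff mul_row_block mulmx0 add0r.
rewrite -row_mx0 => /eq_row_mx [e1' e2'].
have /submxP [z' ez'] := eqmx_ker_sub (ex2 _ hk i) e2'.
have e' : (lsubmx w - z' *m horse_conn k.+1 i) *m d1 k i = 0.
  by rewrite mulmxBl -mulmxA es mulmxN (mulmxA z') -ez' opprK e1'.
have /submxP [y' ey'] := eqmx_ker_sub (ex1 _ hk i) e'.
apply/submxP; exists (row_mx y' z'); rewrite mul_row_block mulmx0 add0r.
by rewrite -ey' -ez' subrK.
Qed.

Lemma horse_mono_end : if m is m'.+1 then mono (horse_diff m') else mono horse_aug.
Proof.
case: res1 => _ _ _ _ mo1; case: res2 => _ _ _ _ mo2.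
case: m mo1 mo2 => [|m'] mo1 mo2 i; apply: inj_row_free => w.
  rewrite -(hsubmxK w) /horse_aug mul_row_col => e.
  move: (e); rewrite (row_free_mul_eq0 (mo2 i) (horse_aug_ker e)) mul0mx addr0 /horse_base.
  rewrite mulmxA => /(row_free_mul_eq0 (io_mono i)) /(row_free_mul_eq0 (mo1 i)) ->.
  by rewrite row_mx0.
rewrite -(hsubmxK w) /horse_diff mul_row_block mulmx0 add0r -row_mx0 => /eq_row_mx [e1' e2'].
move: e1'; rewrite (row_free_mul_eq0 (mo2 i) e2') mul0mx addr0.
by move=> /(row_free_mul_eq0 (mo1 i)) ->; rewrite row_mx0.
Qed.

Lemma horseshoe_resolution : is_resolution n c m horse_diff horse_aug.
Proof.
split; [|exact: horse_diff_hom | split | exact: horse_exact | exact: horse_mono_end].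
- move=> k hk; case: res1 => hP1 _ _ _ _; case: res2 => hP2 _ _ _ _.
  case: (hP1 _ hk) (hP2 _ hk) => v1 p1 [v2 p2].
  by split; [apply: dsum_rep_valid | apply: dsum_rep_projective].
- exact: horse_aug_hom.
- exact: horse_aug_epi.
- exact: horse_exact0.
Qed.

End Horseshoe.

Lemma pdim_le_extension (K : fieldType) n c (M1 M M2 : rep K) (io : hom M1 M) (pi : hom M M2) m :
  valid_rep n c M -> valid_rep n c M2 -> is_hom io -> is_hom pi ->
  mono io -> epi pi -> exact_at io pi ->
  pdim_le n c M1 m -> pdim_le n c M2 m -> pdim_le n c M m.
Proof.
move=> vM vM2 io_hom pi_hom io_mono pi_epi exM [P1 [d1 [e1 res1]]] [P2 [d2 [e2 res2]]].
have [hP2 _ [e2_hom _ _] _ _] := res2.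
have [tau [tau_hom tau_lift]] := proj2 (hP2 0%N (leq0n m)) _ _ _ e2 vM vM2 pi_hom pi_epi e2_hom.
exists (horse_rep P1 P2), (horse_diff io d1 e1 d2 tau), (horse_aug io e1 tau).
exact (horseshoe_resolution vM io_hom io_mono exM res1 res2 tau_hom tau_lift).
Qed.

Section GlobalDimension.
Variables (K : fieldType) (n : nat) (c : nat -> nat).
Hypothesis hc : kupisch n c.
Local Open Scope ring_scope.
Local Notation valid := (valid_rep n c).

Lemma pdim_le0_zero (M : rep K) : (forall i, rdim M i = 0%N) -> pdim_le n c M 0.
Proof.
move=> M0; exists (fun _ => zero_rep K), (fun _ _ => 0), (fun _ => 0); split => //.
- by move=> k _; split; [apply: zero_rep_valid | apply: zero_rep_projective].
- split => // i; first exact: mx_dim0_eq.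
  by rewrite /row_full mxrank0 M0.
- by move=> i; apply: row_free_flat.
Qed.

Definition vertex_rep (M : rep K) j : rep K :=
  @Rep K (fun i => if i == j then rdim M i else 0%N) (fun i => 0).

Definition trunc_rep (M : rep K) j : rep K :=
  @Rep K (fun i => if (i < j)%N then rdim M i else 0%N)
    (fun i => (pid_mx (rdim M i) : 'M[K]_(_, rdim M i)) *m rmap M i *m
              (pid_mx (rdim M i.+1) : 'M[K]_(rdim M i.+1, _))).

Lemma pathmx_trunc (M : rep K) j i k :
  pathmx (trunc_rep M j) i k = (pid_mx (rdim M i) : 'M[K]_(_, rdim M i)) *m pathmx M i k *m
    (pid_mx (rdim M (k + i)%N) : 'M[K]_(rdim M (k + i)%N, rdim (trunc_rep M j) (k + i)%N)).
Proof.
elim: k => [|k IH].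
  change (1%:M = (pid_mx (rdim M i) : 'M[K]_(rdim (trunc_rep M j) i, rdim M i)) *m 1%:M *m
    (pid_mx (rdim M i) : 'M[K]_(rdim M i, rdim (trunc_rep M j) i))).
  by rewrite mulmx1 mul_pid_mx -pid_mx_1; apply: eq_pid_mx; interval_arith.
change (pathmx (trunc_rep M j) i k *m rmap (trunc_rep M j) (k + i)%N =
  (pid_mx (rdim M i) : 'M[K]_(_, rdim M i)) *m (pathmx M i k *m rmap M (k + i)%N) *m
    (pid_mx (rdim M (k + i)%N.+1) :
       'M[K]_(rdim M (k + i)%N.+1, rdim (trunc_rep M j) (k + i)%N.+1))).
rewrite IH /=; case: (ltnP (k + i)%N j) => hk; last by apply: mx_dim0_eq; interval_arith.
rewrite -!mulmxA; congr (_ *m (_ *m _)).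
by rewrite mulmxA mul_pid_mx (@eq_pid_mx _ _ _ _ (rdim M (k + i)%N)) ?pid_mx_1 ?mul1mx //;
  interval_arith.
Qed.

Variable g : nat.
Hypothesis hg : forall j, (j < n)%N -> (xstop n c j - 1 <= g)%N.

(* A module supported on [0, j] is an extension of its part at vertex j, which is
   concentrated there, by its restriction to [0, j). *)
Lemma pdim_le_support b : (b <= n)%N -> forall M : rep K, valid M ->
  (forall i, (b <= i)%N -> rdim M i = 0%N) -> pdim_le n c M g.
Proof.
elim: b => [|j IH] hb M vM M0.
  by apply: (pdim_leW (leq0n g)); apply: pdim_le0_zero => i; apply: M0.
have hj : (j < n)%N by [].
pose io : hom (vertex_rep M j) M := fun i => pid_mx (rdim M i).
pose pi : hom M (trunc_rep M j) := fun i => pid_mx (rdim M i).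
have {}M0 i : (j < i)%N -> rdim M i = 0%N by apply: M0.
have v1 : valid (vertex_rep M j).
  split => i hi; first by rewrite /=; case: eqP => // e; lia.
  by have := kupisch_pos hc hi; case: (c i) => [|k] //= _; rewrite mulmx0.
have v2 : valid (trunc_rep M j).
  case: vM => V0 Vrel; split => i hi; first by rewrite /= V0 //; case: ifP.
  by rewrite pathmx_trunc Vrel // mulmx0 mul0mx.
apply: (@pdim_le_extension _ _ _ _ _ _ io pi) => //.
- by move=> i; apply: mx_dim0_eq; have := M0 i.+1; interval_arith.
- move=> i; case: (ltnP i j) => hi; last by apply: mx_dim0_eq; interval_arith.
  have idem : (pid_mx (rdim M i) : 'M[K]_(rdim M i, rdim (trunc_rep M j) i)) *m
    (pid_mx (rdim M i) : 'M[K]_(rdim (trunc_rep M j) i, rdim M i)) = 1%:M.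
    by rewrite mul_pid_mx (@eq_pid_mx _ _ _ _ (rdim M i)) ?pid_mx_1 //; interval_arith.
  by rewrite /pi /= !mulmxA idem mul1mx.
- by move=> i; apply: row_free_pid_mx; interval_arith.
- by move=> i; apply: row_full_pid_mx; interval_arith.
- by move=> i; apply: eqmx_ker_pid_mx; have := M0 i; interval_arith.
- apply: (pdim_leW (hg hj)); apply: (pdim_le_concentrated hc hj).
  by move=> i /negPf /= ->.
- by apply: IH => //; [lia | move=> i hi; rewrite /= ltnNge hi].
Qed.

Lemma pdim_le_valid (M : rep K) : valid M -> pdim_le n c M g.
Proof. by case=> M0 Mrel; apply: (pdim_le_support (leqnn n)). Qed.

End GlobalDimension.

Lemma simple_rep_valid (K : fieldType) n c i :
  kupisch n c -> (i < n)%N -> valid_rep n c (simple_rep K i).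
Proof.
move=> hc hi; split => k hk; first by rewrite /=; case: eqP => // e; lia.
by have := kupisch_pos hc hk; case: (c k) => [|k'] //= _; rewrite mulmx0.
Qed.

Theorem lemma3p3 (K : closedFieldType) (n : nat) (c : nat -> nat)
  (hn : (0 < n)%N) (hc : kupisch n c) :
  (forall i, (i < n)%N ->
     has_pdim n c (simple_rep K i) (tdist n c i i.+1 - 1)) /\
  has_gldim K n c ((\max_(i < n) tdist n c i i.+1) - 1).
Proof.
have S0 i k : k != i -> rdim (simple_rep K i) k = 0 by move=> /negPf /= ->.
have pdimS i : i < n -> has_pdim n c (simple_rep K i) (tdist n c i i.+1 - 1).
  move=> hi; rewrite tdist_xstop //; split; first exact (pdim_le_concentrated hc hi (S0 i)).
  move=> m; apply: (pdim_le_concentrated_ge hc hi (S0 i) (simple_rep_valid K hc hi)).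
  by rewrite /= eqxx.
split=> //; split.
  move=> M vM; apply: (pdim_le_valid hc _ vM) => j hj; rewrite -tdist_xstop //.
  by apply: leq_sub2r; exact: (@leq_bigmax _ (fun i : 'I_n => tdist n c i i.+1) (Ordinal hj)).
move=> m allM; suff : \max_(i < n) tdist n c i i.+1 <= m.+1 by lia.
apply/bigmax_leqP => i _; have hi := ltn_ord i.
by have := (pdimS i hi).2 m (allM _ (simple_rep_valid K hc hi)); lia.
Qed.
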